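(* In the option framework described in the context, let the terminations $\beta_o(s,\vartheta)$ be differentiable in $\vartheta$, write $\beta'_o(s',\vartheta)=1-\beta_o(s',\vartheta)+\pi_{\mathcal O}(s',o)\beta_o(s',\vartheta)$, and for a vector $\varphi$ define the compatible function approximator $h^{\beta_o}_\varphi(s')=\varphi^T\frac{\partial\ln\beta'_o(s',\vartheta)}{\partial\vartheta}$ and the squared error $$\epsilon(\varphi,\vartheta)=\sum_{s',o}\mu_{\mathcal O}(s',o)\,L_o(s';\vartheta)\,\big(h^{\beta_o}_\varphi(s')-a'_{\mathcal O}(s',o)\big)^2,\qquad L_o(s';\vartheta)=\frac{\beta'_o(s',\vartheta)}{1-\beta'_o(s',\vartheta)},$$ where it is assumed that $1-\beta'_o(s',\vartheta)\neq0$. Let $G_\vartheta=-\sum_{s',o}\mu_{\mathcal O}(s',o)\frac{\partial\ln\beta_o(s',\vartheta)}{\partial\vartheta}\big(\frac{\partial\ln\beta'_o(s',\vartheta)}{\partial\vartheta}\big)^T$ (assumed invertible). If $\tilde\varphi$ is a local minimum of $\epsilon(\cdot,\vartheta)$, then $$G_\vartheta^{-1}\frac{\partial u(o_0,s_1)}{\partial\vartheta}=-\tilde\varphi,$$ i.e. the natural gradient of the expected discounted return with respect to $\vartheta$ is $-\tilde\varphi$.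
   Context: Finite MDP with states $\mathcal S$, actions $\mathcal A$, transition function $P$, discount $\gamma$; finite option set $\mathcal O$ with intra-option policies $\pi_o(s,a)$, terminations $\beta_o(s,\vartheta)$ and a policy over options $\pi_{\mathcal O}(s,o)$; in state $s_t$ with option $o_t$ the agent draws $a_t\sim\pi_{o_t}(s_t,\cdot)$, moves to $s_{t+1}$, and $o_t$ terminates there with probability $\beta_{o_t}(s_{t+1},\vartheta)$, after which a new option is drawn from $\pi_{\mathcal O}(s_{t+1},\cdot)$ (so $\beta'_o(s',\vartheta)$ is the probability that $o$ is active when leaving $s'$ given $o$ was active on entering $s'$). Value functions (expected discounted returns): $v_{\pi_{\mathcal O}}(s)$ given $S_0=s$; $q_{\pi_{\mathcal O}}(s,o)$ given $S_0=s,O_0=o$; option-value upon arrival $u(o,s')$ given $O_0=o,S_1=s'$, satisfying $u(o,s')=(1-\beta_o(s'))q_{\pi_{\mathcal O}}(s',o)+\beta_o(s')v_{\pi_{\mathcal O}}(s')$. Advantages: $a_{\mathcal O}(s',o)=q_{\pi_{\mathcal O}}(s',o)-v_{\pi_{\mathcal O}}(s')$ and the advantage of continued option $a'_{\mathcal O}(s',o)=u(o,s')-q_{\pi_{\mathcal O}}(s',o)$. $\mu_{\mathcal O}(s',o)=\sum_{t\ge0}\gamma^t\Pr(S_{t+1}=s',O_t=o\mid s_1,o_0)$ is the discounted weighting of pairs from $(s_1,o_0)$ (treated as a stationary distribution). The gradient $\partial u(o_0,s_1)/\partial\vartheta$ is given by the termination gradient theorem: $\frac{\partial u(o_0,s_1)}{\partial\vartheta}=-\sum_{o,s'}\mu_{\mathcal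 O}(s',o)\frac{\partial\beta_o(s',\vartheta)}{\partial\vartheta}a_{\mathcal O}(s',o)$. *)

From HB Require Import structures.
From mathcomp Require Import all_boot all_order all_algebra.
From mathcomp Require Import all_classical all_reals all_analysis.
Set Implicit Arguments. Unset Strict Implicit. Unset Printing Implicit Defensive.
Import Order.TTheory GRing.Theory Num.Theory.
Import numFieldNormedType.Exports.
Local Open Scope ring_scope.

(* The parameter vartheta lives in R^k, represented as a row vector 'rV[R]_k.
   Gradients are column vectors: (grad f x) i = partial derivative of f at x
   in direction of the i-th basis vector. *)
Definition grad (R : realType) (k : nat) (f : 'rV[R]_k -> R) (x : 'rV[R]_k)
  : 'cV[R]_k := \col_i ('D_(delta_mx 0 i) f x).

Definition betaP (R : realType) (S O : Type) (k : nat)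
  (piO : S -> O -> R) (beta : O -> S -> 'rV[R]_k -> R)
  (o : O) (s : S) (th : 'rV[R]_k) : R :=
  1 - beta o s th + piO s o * beta o s th.

Definition glnbetaP (R : realType) (S O : Type) (k : nat)
  (piO : S -> O -> R) (beta : O -> S -> 'rV[R]_k -> R)
  (o : O) (s : S) (th : 'rV[R]_k) : 'cV[R]_k :=
  grad (fun t => ln (betaP piO beta o s t)) th.

Definition glnbeta (R : realType) (S O : Type) (k : nat)
  (beta : O -> S -> 'rV[R]_k -> R) (o : O) (s : S) (th : 'rV[R]_k)
  : 'cV[R]_k := grad (fun t => ln (beta o s t)) th.

Definition hcompat (R : realType) (S O : Type) (k : nat)
  (piO : S -> O -> R) (beta : O -> S -> 'rV[R]_k -> R)
  (th : 'rV[R]_k) (phi : 'cV[R]_k) (o : O) (s : S) : R :=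
  ((phi^T *m glnbetaP piO beta o s th) 0 0).

Definition Lw (R : realType) (S O : Type) (k : nat)
  (piO : S -> O -> R) (beta : O -> S -> 'rV[R]_k -> R)
  (o : O) (s : S) (th : 'rV[R]_k) : R :=
  betaP piO beta o s th / (1 - betaP piO beta o s th).

Definition eps (R : realType) (S O : finType) (k : nat)
  (piO : S -> O -> R) (beta : O -> S -> 'rV[R]_k -> R)
  (mu : S -> O -> R) (aP : S -> O -> R)
  (phi : 'cV[R]_k) (th : 'rV[R]_k) : R :=
  \sum_(s : S) \sum_(o : O)
     mu s o * Lw piO beta o s th * (hcompat piO beta th phi o s - aP s o) ^+ 2.

Definition Gmat (R : realType) (S O : finType) (k : nat)
  (piO : S -> O -> R) (beta : O -> S -> 'rV[R]_k -> R)
  (mu : S -> O -> R) (th : 'rV[R]_k) : 'M[R]_k :=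
  - \sum_(s : S) \sum_(o : O)
      mu s o *: (glnbeta beta o s th *m (glnbetaP piO beta o s th)^T).

From HB Require Import structures.
From mathcomp Require Import all_boot all_order all_algebra.
From mathcomp Require Import all_classical all_reals all_analysis.
From mathcomp Require Import ring lra.
Import Order.TTheory GRing.Theory Num.Theory.
Import numFieldNormedType.Exports.
Local Open Scope ring_scope.
Local Open Scope classical_set_scope.

(* The error eps(., theta) is a quadratic function of phi, so at a local
   minimum its gradient vanishes:
     sum mu L (h_phi - a') d ln beta' = 0.
   Since d beta' = (pi - 1) d beta and 1 - beta' = beta (1 - pi), the
   compatible features satisfy L d ln beta' = - d ln beta, and the
   stationarity condition becomes G phi + sum mu a' d ln beta = 0.
   Finally a' = u - q = - beta (q - v), hence
     sum mu a' d ln beta = - sum mu (q - v) d beta = d u / d theta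
   by the termination gradient theorem, i.e. G phi = - d u / d theta. *)

Lemma quadratic_ge0_near0 (R : realType) (c d : R) :
  (\forall t \near 0, 0 <= t * c + t ^+ 2 * d) -> c = 0.
Proof.
move=> /nbhs_ballP[e /= e0 He].
pose p : {poly R} := c *: 'X + d *: 'X^2.
have pE t : p.[t] = t * c + t ^+ 2 * d.
  by rewrite hornerD !hornerZ hornerX hornerXn mulrC [d * _]mulrC.
have min0 : is_derive (0 : R) 1 (horner p) 0.
  apply: (@derive1_at_min _ _ (- e) e) => [||| t].
  - lra.
  - by move=> t _; apply: ex_derive.
  - by rewrite in_itv /=; apply/andP; lra.
  rewrite in_itv /= => /andP[te et].
  rewrite !pE mul0r expr0n /= mul0r addr0; apply: He.
  by rewrite /ball /= sub0r normrN ltr_norml te et.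
have := @derive_val _ _ _ _ _ _ _ min0.
rewrite (@derive_val _ _ _ _ _ _ _ (is_derive_poly p 0)).
by rewrite /p derivD !derivZ derivX derivXn !hornerE.
Qed.

Lemma local_min_along_line (R : realType) (V : normedModType R) (E : V -> R)
    (p w : V) :
  (\forall x \near p, E p <= E x) -> \forall t \near (0 : R), E p <= E (p + t *: w).
Proof.
have : (fun t : R => p + t *: w) @ (0 : R) --> p.
  rewrite -[X in _ --> X]addr0 -(scale0r w).
  apply: cvgD; first exact: cvg_cst.
  by apply: cvgZ; [exact: cvg_id | exact: cvg_cst].
by move=> /[apply].
Qed.

Lemma quadratic_local_min (R : realType) (V : normedModType R) (E : V -> R)
    (p w : V) (c d : R) :
  (forall t, E (p + t *: w) = E p + t * c + t ^+ 2 * d) ->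
  (\forall x \near p, E p <= E x) -> c = 0.
Proof.
move=> E_line /(@local_min_along_line _ _ _ _ w) min_w.
apply: (@quadratic_ge0_near0 _ _ d).
by apply: filterS min_w => t; rewrite E_line; lra.
Qed.

Lemma grad_ln (R : realType) (k : nat) (f : 'rV[R]_k -> R) (x : 'rV[R]_k) :
  differentiable f x -> 0 < f x ->
  grad (fun t => ln (f t)) x = (f x)^-1 *: grad f x.
Proof.
move=> df fx_gt0; apply/matrixP => i j; rewrite !mxE.
have dln : differentiable (@ln R) (f x).
  by apply/derivable1_diffP; apply: ex_derive; apply: is_derive1_ln.
rewrite (_ : (fun t => ln (f t)) = @ln R \o f) //.
rewrite deriveE; last exact: differentiable_comp.
rewrite diff_comp // /= diff1E // derive1E.
rewrite (@derive_val _ _ _ _ _ _ _ (is_derive1_ln fx_gt0)).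
by rewrite -deriveE // mulrC.
Qed.

Section Termination.
Variables (R : realType) (S O : Type) (k : nat).
Variables (piO : S -> O -> R) (beta : O -> S -> 'rV[R]_k -> R).
Variables (o : O) (s : S) (theta : 'rV[R]_k).
Hypothesis dbeta : differentiable (beta o s) theta.
Hypothesis beta_gt0 : 0 < beta o s theta.
Hypothesis betaP_gt0 : 0 < betaP piO beta o s theta.
Hypothesis betaP_neq1 : 1 - betaP piO beta o s theta != 0.

Let betaPE : betaP piO beta o s = cst 1 + (piO s o - 1) *: beta o s.
Proof.
by apply/funext => t; rewrite /betaP !fctE /= [_ *: _]/GRing.scale /=; ring.
Qed.

Lemma differentiable_betaP : differentiable (betaP piO beta o s) theta.
Proof.
rewrite betaPE; apply: differentiableD; first exact: differentiable_cst.
exact: differentiableZ.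
Qed.

Lemma grad_betaP :
  grad (betaP piO beta o s) theta = (piO s o - 1) *: grad (beta o s) theta.
Proof.
apply/matrixP => i j; rewrite !mxE betaPE deriveD //; last first.
  exact/diff_derivable/differentiableZ.
by rewrite derive_cst add0r deriveZ //; exact/diff_derivable.
Qed.

Lemma glnbetaE :
  glnbeta beta o s theta = (beta o s theta)^-1 *: grad (beta o s) theta.
Proof. exact: grad_ln. Qed.

Lemma Lw_glnbetaP :
  Lw piO beta o s theta *: glnbetaP piO beta o s theta
  = - glnbeta beta o s theta.
Proof.
rewrite /glnbetaP grad_ln //; last exact: differentiable_betaP.
rewrite grad_betaP glnbetaE !scalerA -scaleNr; congr (_ *: _).
rewrite /Lw; move: betaP_neq1 (lt0r_neq0 betaP_gt0); rewrite /betaP => ne1 ne0.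
by field; rewrite (lt0r_neq0 beta_gt0) ne0 ne1.
Qed.

End Termination.

Section CompatibleError.
Variables (R : realType) (S O : finType) (k : nat).
Variables (piO : S -> O -> R) (beta : O -> S -> 'rV[R]_k -> R).
Variables (mu a : S -> O -> R) (theta : 'rV[R]_k).

Local Notation h := (hcompat piO beta theta).
Local Notation L o s := (Lw piO beta o s theta).
Local Notation E phi := (eps piO beta mu a phi theta).

Lemma hcompatDZ (phi w : 'cV[R]_k) (t : R) o s :
  h (phi + t *: w) o s = h phi o s + t * h w o s.
Proof. by rewrite /hcompat linearD linearZ /= mulmxDl -scalemxAl !mxE. Qed.

Lemma hcompat_delta (i : 'I_k) o s :
  h (delta_mx i 0) o s = glnbetaP piO beta o s theta i 0.
Proof. by rewrite /hcompat trmx_delta -rowE mxE. Qed.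

Lemma eps_along_line (phi w : 'cV[R]_k) (t : R) :
  E (phi + t *: w) = E phi
    + t * (2 * \sum_s \sum_o mu s o * L o s * (h phi o s - a s o) * h w o s)
    + t ^+ 2 * \sum_s \sum_o mu s o * L o s * h w o s ^+ 2.
Proof.
rewrite /eps !mulr_sumr -!big_split; apply: eq_bigr => s _.
rewrite !mulr_sumr -!big_split; apply: eq_bigr => o _.
by rewrite hcompatDZ /=; ring.
Qed.

Lemma eps_local_min_stationary (phi : 'cV[R]_k) :
  (\forall psi \near phi, E phi <= E psi) ->
  \sum_s \sum_o (mu s o * L o s * (h phi o s - a s o))
                  *: glnbetaP piO beta o s theta = 0.
Proof.
move=> phi_min; apply/matrixP => i j; rewrite (ord1 j) !mxE summxE.
have /eqP := @quadratic_local_min _ _ _ _ _ _ _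
  (eps_along_line phi (delta_mx i 0)) phi_min.
rewrite mulf_eq0 pnatr_eq0 /= => /eqP stationary.
rewrite -[RHS]stationary; apply: eq_bigr => s _.
rewrite summxE; apply: eq_bigr => o _.
by rewrite mxE hcompat_delta.
Qed.

Lemma Gmat_mulmx (phi : 'cV[R]_k) :
  Gmat piO beta mu theta *m phi
  = - \sum_s \sum_o (mu s o * h phi o s) *: glnbeta beta o s theta.
Proof.
rewrite /Gmat mulNmx mulmx_suml; congr (- _); apply: eq_bigr => s _.
rewrite mulmx_suml; apply: eq_bigr => o _.
rewrite -scalemxAl -mulmxA (mx11_scalar (_^T *m phi)) mul_mx_scalar scalerA.
by rewrite /hcompat -[phi^T *m _]trmxK trmx_mul trmxK [in RHS]mxE.
Qed.

Hypothesis dbeta : forall o s, differentiable (beta o s) theta.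
Hypothesis beta_gt0 : forall o s, 0 < beta o s theta.
Hypothesis betaP_gt0 : forall o s, 0 < betaP piO beta o s theta.
Hypothesis betaP_neq1 : forall o s, 1 - betaP piO beta o s theta != 0.

Lemma compatible_stationary_sumE (phi : 'cV[R]_k) :
  \sum_s \sum_o (mu s o * L o s * (h phi o s - a s o))
                  *: glnbetaP piO beta o s theta
  = Gmat piO beta mu theta *m phi
    + \sum_s \sum_o (mu s o * a s o) *: glnbeta beta o s theta.
Proof.
rewrite Gmat_mulmx -sumrN -big_split; apply: eq_bigr => s _.
rewrite -sumrN -big_split; apply: eq_bigr => o _.
rewrite -mulrA [L o s * _]mulrC mulrA -scalerA Lw_glnbetaP //.
by rewrite scalerN mulrBr scalerBl opprB addrC.
Qed.

End CompatibleError.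

Theorem mainTheorem6 (R : realType) (S O : finType) (k : nat)
  (piO : S -> O -> R)                      (* policy over options pi_O(s,o) *)
  (beta : O -> S -> 'rV[R]_k -> R)         (* terminations beta_o(s, th) *)
  (q : S -> O -> 'rV[R]_k -> R)            (* q_{pi_O}(s, o) *)
  (v : S -> 'rV[R]_k -> R)                 (* v_{pi_O}(s) *)
  (u : O -> S -> 'rV[R]_k -> R)            (* u(o, s') *)
  (mu : S -> O -> R)                       (* mu_O(s', o) *)
  (o0 : O) (s1 : S) (theta : 'rV[R]_k) (phit : 'cV[R]_k) :
  (forall s o, 0 <= piO s o) ->
  (forall s, \sum_(o : O) piO s o = 1) ->
  (forall o s th, 0 <= beta o s th <= 1) ->
  (forall s o, 0 <= mu s o) ->
  (forall o s, differentiable (beta o s) theta) ->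
  (forall o s, 0 < beta o s theta) ->
  (forall o s, 0 < betaP piO beta o s theta) ->
  (forall o s, 1 - betaP piO beta o s theta != 0) ->
  (* option-value upon arrival *)
  (forall o s, u o s theta
     = (1 - beta o s theta) * q s o theta + beta o s theta * v s theta) ->
  (* termination gradient theorem *)
  differentiable (u o0 s1) theta ->
  grad (u o0 s1) theta
    = - \sum_(s : S) \sum_(o : O)
          (mu s o * (q s o theta - v s theta)) *: grad (beta o s) theta ->
  Gmat piO beta mu theta \in unitmx ->
  (* phit is a local minimum of eps(., theta) *)
  (\forall phi \near phit,
     eps piO beta mu (fun s o => u o s theta - q s o theta) phit theta
     <= eps piO beta mu (fun s o => u o s theta - q s o theta) phi theta) ->
  invmx (Gmat piO beta mu theta) *m grad (u o0 s1) theta = - phit.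
Proof.
move=> _ _ _ _ dbeta beta_gt0 betaP_gt0 betaP_neq1 u_arrival _ u_grad G_unit.
move=> /eps_local_min_stationary /eqP.
rewrite compatible_stationary_sumE // addr_eq0 => /eqP G_phit.
suff -> : grad (u o0 s1) theta = - (Gmat piO beta mu theta *m phit).
  by rewrite mulmxN mulKmx.
rewrite G_phit opprK u_grad -sumrN; apply: eq_bigr => s _.
rewrite -sumrN; apply: eq_bigr => o _.
rewrite u_arrival glnbetaE // scalerA -scaleNr; congr (_ *: _).
by field; rewrite lt0r_neq0.
Qed.
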